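(* The sets ${\sf End}$, ${\sf FP}$ and ${\sf MT}$ of twisted endofunctions, twisted parking functions and twisted packed words are symmetric suboperads of ${\sf T}\mathbb{N}$ (i.e. each contains the unit $(0)$, is closed under all partial compositions $\circ_i$, and is stable under the action of the symmetric groups). Moreover, ${\sf MT}$ is generated, as a symmetric operad, by $00$ and $01$.
   Context: Let $\mathbb{N}$ be the additive monoid of nonnegative integers. ${\sf T}\mathbb{N}=\biguplus_{n\ge1}\mathbb{N}^n$, elements of arity $n$ being words $x=(x_1,\dots,x_n)$ of length $n$ over $\mathbb{N}$ (written without separators, e.g. $01=(0,1)$), with partial compositions $x\circ_i y:=(x_1,\dots,x_{i-1},x_i+y_1,\dots,x_i+y_m,x_{i+1},\dots,x_n)$ for $x$ of arity $n$, $y$ of arity $m$, $1\le i\le n$, and right action $x\cdot\sigma:=(x_{\sigma(1)},\dots,x_{\sigma(n)})$ for $\sigma\in\mathfrak{S}_n$; this is a symmetric set-operad with unit $(0)$. A word $u$ of length $n$ is a twisted endofunction (resp. twisted parking function, twisted packed word) if the word $(u_1+1,\dots,u_n+1)$ is an endofunction (a word over $\{1,\dots,n\}$) (resp. a parking function: its nondecreasing rearrangement $v$ satisfies $v_j\le j$ for all $j$; resp. a packed word: its set of letters is $\{1,\dots,k\}$ for some $k\ge1$). ${\sf End}$, ${\sf FP}$, ${\sf MT}$ denote the sets of all twisted endofunctions, twisted parking functions and twisted packed words respectively. The symmetric suboperad generated by a set $S$ is the smallest subset containing $S$ and the unit, closed under all $\circ_i$ and the symmetric group actions. *)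

From mathcomp Require Import all_boot all_order all_fingroup.
Set Implicit Arguments. Unset Strict Implicit. Unset Printing Implicit Defensive.

(* Elements of T N are nonempty words over nat, represented as seq nat. *)
Definition in_TN (x : seq nat) : Prop := 0 < size x.

(* Partial composition x o_i y, with 1 <= i <= size x (1-indexed). *)
Definition pcomp (x y : seq nat) (i : nat) : seq nat :=
  take i.-1 x ++ map (addn (nth 0 x i.-1)) y ++ drop i x.

Definition pact (x : seq nat) (s : 'S_(size x)) : seq nat :=
  [seq nth 0 x (s j) | j <- enum 'I_(size x)].

Definition shift1 (u : seq nat) : seq nat := map S u.

Definition is_endofunction (w : seq nat) : Prop :=
  0 < size w /\ all (fun a => (1 <= a <= size w)) w.

Definition is_parking_function (w : seq nat) : Prop :=
  0 < size w /\
  forall j, 1 <= j <= size w -> nth 0 (sort leq w) j.-1 <= j.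

Definition is_packed_word (w : seq nat) : Prop :=
  0 < size w /\
  exists k, 1 <= k /\ forall a, (a \in w) <-> (1 <= a <= k).

Definition End_ (u : seq nat) : Prop := is_endofunction (shift1 u).
Definition FP (u : seq nat) : Prop := is_parking_function (shift1 u).
Definition MT (u : seq nat) : Prop := is_packed_word (shift1 u).

Definition is_sym_suboperad (P : seq nat -> Prop) : Prop :=
  (forall x, P x -> in_TN x) /\
  P [:: 0] /\
  (forall x y i, P x -> P y -> 1 <= i <= size x -> P (pcomp x y i)) /\
  (forall x (s : 'S_(size x)), P x -> P (pact s)).

Inductive gen_suboperad (G : seq nat -> Prop) : seq nat -> Prop :=
| gen_base x : G x -> gen_suboperad G x
| gen_unit : gen_suboperad G [:: 0]
| gen_comp x y i : gen_suboperad G x -> gen_suboperad G y ->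
    1 <= i <= size x -> gen_suboperad G (pcomp x y i)
| gen_act x (s : 'S_(size x)) : gen_suboperad G x ->
    gen_suboperad G (pact s).

From Pilot Require Import Defs.
From mathcomp Require Import all_boot all_order all_fingroup zify.
Import Defs.
Set Implicit Arguments. Unset Strict Implicit. Unset Printing Implicit Defensive.

(* Each of End, FP and MT is cut out by a condition on the multiset of letters
   that is compatible with substitution: End means every letter is smaller than
   the length, FP means at least min(j, n) letters are smaller than j for every
   j, and MT means the set of letters is an initial segment of nat.  A partial
   composition x o_i y replaces the letter c = x_i by the block c + y, which
   preserves each of these conditions.
   For the generation statement, every twisted packed word is a permutation of
   its nondecreasing rearrangement, and a nondecreasing twisted packed word
   0 :: v with v nonempty is either 00 o_2 v (if 0 occurs in v) or
   01 o_2 (v - 1), and induction on the length applies. *)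

Lemma pact_tuple (x : seq nat) (s : 'S_(size x)) :
  pact s = [tuple tnth (in_tuple x) (s j) | j < size x].
Proof. by apply: eq_map => j; rewrite (tnth_nth 0). Qed.

Lemma pact_perm_eq (x : seq nat) (s : 'S_(size x)) : perm_eq (pact s) x.
Proof. by apply/(@tuple_permP _ _ (pact s) (in_tuple x)); exists s; rewrite pact_tuple. Qed.

Lemma perm_eq_pact (x y : seq nat) :
  perm_eq x y -> exists s : 'S_(size y), pact s = x.
Proof.
by move=> /(@tuple_permP _ _ x (in_tuple y)) [s ->]; exists s; rewrite pact_tuple.
Qed.

Lemma pact_closed (P : seq nat -> Prop) :
  (forall x y, perm_eq x y -> P x -> P y) ->
  forall x (s : 'S_(size x)), P x -> P (pact s).
Proof. by move=> Pperm x s; apply: Pperm; rewrite perm_sym pact_perm_eq. Qed.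

Lemma mem_pcomp (x y : seq nat) (i a : nat) :
  (a \in pcomp x y i) =
  [|| a \in take i.-1 x, a \in map (addn (nth 0 x i.-1)) y | a \in drop i x].
Proof. by rewrite /pcomp !mem_cat. Qed.

Section PartialComposition.

Variables (x y : seq nat) (i : nat).
Hypothesis i_in : 1 <= i <= size x.

Lemma pcomp_splitE : x = take i.-1 x ++ nth 0 x i.-1 :: drop i x.
Proof.
have -> /= : drop i x = drop i.-1.+1 x by congr drop; lia.
by rewrite -drop_nth ?cat_take_drop //; lia.
Qed.

Lemma mem_nth_pcomp : nth 0 x i.-1 \in x.
Proof. by case/andP: i_in => i_pos i_le; apply: mem_nth; rewrite prednK. Qed.

Lemma size_pcomp : size (pcomp x y i) = size x + size y - 1.
Proof. by rewrite [in RHS]pcomp_splitE /pcomp !size_cat /= size_map; lia. Qed.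

Lemma count_pcomp (p : pred nat) :
  count p (pcomp x y i) + p (nth 0 x i.-1) =
  count p x + count p (map (addn (nth 0 x i.-1)) y).
Proof. by rewrite [in count p x]pcomp_splitE /pcomp !count_cat /=; lia. Qed.

Lemma sub_mem_pcomp : 0 \in y -> {subset x <= pcomp x y i}.
Proof.
move=> y0 a; rewrite {1}pcomp_splitE mem_cat inE mem_pcomp.
case/or3P=> [-> // | /eqP-> | ->]; last by rewrite !orbT.
by apply/or3P/Or32/mapP; exists 0; rewrite ?addn0.
Qed.

End PartialComposition.

Lemma End_iff (u : seq nat) : End_ u <-> 0 < size u /\ all (gtn (size u)) u.
Proof. by rewrite /End_ /is_endofunction /shift1 size_map all_map. Qed.

Lemma End_sym_suboperad : is_sym_suboperad End_.
Proof.
split; first by move=> x /End_iff[].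
split; first exact/End_iff.
split; last first.
  apply: pact_closed => x y xy /End_iff[x0 xlt]; apply/End_iff.
  by rewrite -(perm_size xy) -(perm_all _ xy).
move=> x y i /End_iff[x0 /allP xlt] /End_iff[y0 /allP ylt] i_in.
apply/End_iff; rewrite size_pcomp //; split; first lia.
have := xlt _ (mem_nth_pcomp i_in) => /= c_lt.
apply/allP => a; rewrite mem_pcomp => /or3P[/mem_take|/mapP[b /ylt /= b_lt ->]|/mem_drop].
- by move/xlt => /=; lia.
- by lia.
- by move/xlt => /=; lia.
Qed.

Definition down_closed (u : seq nat) : Prop :=
  forall a b, a \in u -> b <= a -> b \in u.

Lemma bigmax_mem (u : seq nat) : 0 < size u -> \max_(a <- u) a \in u.
Proof.
elim: u => [|a [|b u] IH] _ //; first by rewrite big_seq1 mem_seq1.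
rewrite big_cons inE /maxn; case: ltnP => _; last by rewrite eqxx.
by rewrite IH ?orbT.
Qed.

Lemma MT_iff (u : seq nat) : MT u <-> 0 < size u /\ down_closed u.
Proof.
rewrite /MT /is_packed_word /shift1 size_map.
have memS a : (a.+1 \in map S u) = (a \in u) by rewrite mem_map //; apply: succn_inj.
split=> -[u0 u_packed]; split=> //.
  have [k [_ memk]] := u_packed.
  move=> a b; rewrite -!memS => /(memk _).1 ak ba.
  by apply/(memk _).2; lia.
exists (\max_(a <- u) a).+1; split=> // -[|a].
  by split=> // /mapP[].
rewrite memS; split=> [au | am]; first by have := leq_bigmax_seq (F := id) a au isT.
by apply: u_packed (bigmax_mem u0) _; lia.
Qed.

Lemma MT_perm (x y : seq nat) : perm_eq x y -> MT x -> MT y.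
Proof.
move=> xy /MT_iff[x0 xdown]; apply/MT_iff.
by rewrite -(perm_size xy); split=> // a b; rewrite -!(perm_mem xy); apply: xdown.
Qed.

Lemma MT_sym_suboperad : is_sym_suboperad MT.
Proof.
split; first by move=> x /MT_iff[].
split.
  by apply/MT_iff; split=> // a b; rewrite mem_seq1 => /eqP->; case: b.
split; last exact: pact_closed MT_perm.
move=> x y i /MT_iff[x0 xdown] /MT_iff[y0 ydown] i_in.
set c := nth 0 x i.-1.
have cx : c \in x := mem_nth_pcomp i_in.
have y_0 : 0 \in y by case: y y0 ydown => // b y _ ydown; apply: (ydown b); rewrite ?inE ?eqxx.
have sub_x := sub_mem_pcomp i_in y_0.
apply/MT_iff; rewrite size_pcomp //; split; first lia.
move=> a b; rewrite [a \in _]mem_pcomp => /or3P[/mem_take ax|/mapP[d yd ->]|/mem_drop ax] ba.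
- exact/sub_x/(xdown a).
- case: (leqP c b) => cb; last by apply/sub_x/(xdown c) => //; lia.
  rewrite mem_pcomp; apply/or3P/Or32/mapP; exists (b - c); last lia.
  by apply: (ydown d) => //; lia.
- exact/sub_x/(xdown a).
Qed.

Lemma sorted_count_leq (v : seq nat) (j k : nat) : sorted leq v ->
  (k < count (leq^~ j) v) = (k < size v) && (nth 0 v k <= j).
Proof.
elim: v k => [|a v IH] k //= v_sorted.
have a_min : all (leq a) v := order_path_min leq_trans v_sorted.
case: (leqP a j) => aj /=.
  by case: k => [|k] //=; rewrite add1n ltnS IH ?(path_sorted v_sorted).
have -> : count (leq^~ j) v = 0.
  apply/eqP; rewrite -leqn0 leqNgt -has_count.
  by apply/hasP => -[b /(allP a_min) /= ab bj]; lia.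
case: k => [|k] /=; first lia.
rewrite ltnS; case: (ltnP k (size v)) => //= kv; apply/esym/negbTE.
by rewrite -ltnNge (leq_trans aj (allP a_min _ (mem_nth 0 kv))).
Qed.

Lemma FP_iff (u : seq nat) :
  FP u <-> 0 < size u /\ forall j, minn j (size u) <= count (gtn j) u.
Proof.
rewrite /FP /is_parking_function /shift1 size_map.
set v := sort leq (map S u).
have v_perm : perm_eq v (map S u) by rewrite perm_sort.
have v_sorted : sorted leq v by apply/sort_sorted/leq_total.
have v_size : size v = size u by rewrite (perm_size v_perm) size_map.
have countE j : count (gtn j) u = count (leq^~ j) v.
  by rewrite (seq.permP v_perm) count_map.
split=> -[u0 u_park]; split=> // j.
  rewrite countE leqNgt; apply/negP => lt_min.
  have := sorted_count_leq j (count (leq^~ j) v) v_sorted; rewrite ltnn v_size.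
  have := u_park (count (leq^~ j) v).+1; rewrite /=; lia.
move=> /andP[j1 ju].
have : j.-1 < count (leq^~ j) v by have := u_park j; rewrite countE; lia.
by rewrite sorted_count_leq // => /andP[].
Qed.

Lemma FP_sym_suboperad : is_sym_suboperad FP.
Proof.
split; first by move=> x /FP_iff[].
split; first by apply/FP_iff; split=> // -[|[|j]].
split; last first.
  apply: pact_closed => x y xy /FP_iff[x0 xcount]; apply/FP_iff.
  by rewrite -(perm_size xy); split=> // j; rewrite -(seq.permP xy).
move=> x y i /FP_iff[x0 xcount] /FP_iff[y0 ycount] i_in.
apply/FP_iff; rewrite size_pcomp //; split; first lia.
move=> j; set c := nth 0 x i.-1.
have c_lt : c < size x.
  have /allP : all (gtn (size x)) x.
    by rewrite all_count eqn_leq count_size /=; have := xcount (size x); rewrite minnn.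
  by apply; apply: mem_nth_pcomp.
have := count_pcomp y i_in (gtn j); rewrite -/c count_map.
have -> : count (preim (addn c) (gtn j)) y = count (gtn (j - c)) y.
  by apply: eq_count => b /=; rewrite ltn_subRL.
have := xcount j; have := ycount (j - c).
by case: (ltnP c j) => /=; lia.
Qed.

Definition MT_generators (x : seq nat) : Prop := x = [:: 0; 0] \/ x = [:: 0; 1].

Lemma gen_MT (u : seq nat) : gen_suboperad MT_generators u -> MT u.
Proof.
have [_ [MT0 [MTcomp MTact]]] := MT_sym_suboperad.
elim=> {u} // [x [->|->] | x y i _ ? _ ? ? | x s _ ?]; last 2 first.
- exact: MTcomp.
- exact: MTact.
all: apply/MT_iff; split=> // a b; rewrite !inE.
  by case/orP=> /eqP->; case: b.
by case/orP=> /eqP->; case: b => [|[]].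
Qed.

Lemma pcomp00 (v : seq nat) : pcomp [:: 0; 0] v 2 = 0 :: v.
Proof. by rewrite /pcomp /= cats0 (eq_map add0n) map_id. Qed.

Lemma pcomp01 (v : seq nat) : pcomp [:: 0; 1] v 2 = 0 :: map S v.
Proof. by rewrite /pcomp /= cats0 (eq_map add1n). Qed.

Lemma MT_cons0 (v : seq nat) : MT (0 :: v) -> 0 \in v -> MT v.
Proof.
move=> /MT_iff[_ down] v0; apply/MT_iff; split; first by case: v v0 down.
move=> a b av ba; have := down a b; rewrite !inE av orbT => /(_ isT ba).
by case/orP=> // /eqP->.
Qed.

Lemma MT_cons_shift (v : seq nat) : 0 < size v -> MT (0 :: map S v) -> MT v.
Proof.
have memS a : (a.+1 \in map S v) = (a \in v) by rewrite mem_map //; apply: succn_inj.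
move=> v0 /MT_iff[_ down]; apply/MT_iff; split=> // a b av ba.
by have := down a.+1 b.+1; rewrite !inE /= !memS; apply.
Qed.

Lemma sorted_MT_head (a : nat) (v : seq nat) :
  sorted leq (a :: v) -> MT (a :: v) -> a = 0.
Proof.
move=> v_sorted /MT_iff[_ down].
have : 0 \in a :: v by apply: (down a); rewrite ?inE ?eqxx.
rewrite inE => /orP[/eqP// | /(allP (order_path_min leq_trans v_sorted))].
by rewrite leqn0 => /eqP.
Qed.

Lemma sorted_MT_gen (u : seq nat) :
  sorted leq u -> MT u -> gen_suboperad MT_generators u.
Proof.
have [n] := ubnP (size u); elim: n u => // n IH [|a v] /= v_size sv MTu.
  by case/MT_iff: MTu.
have a0 := sorted_MT_head sv MTu; subst a.
have sv' : sorted leq v := path_sorted sv.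
have [-> | v_pos] := eqVneq v [::]; first exact: gen_unit.
have [v0 | v_no0] := boolP (0 \in v).
  rewrite -pcomp00; apply: gen_comp => //; first by apply: gen_base; left.
  by apply: IH => //; apply: MT_cons0.
have shiftE : v = map S (map predn v).
  by rewrite -map_comp map_id_in // => -[|c] // v0; rewrite v0 in v_no0.
rewrite shiftE in v_size sv' MTu; rewrite shiftE -pcomp01.
apply: gen_comp => //; first by apply: gen_base; right.
apply: IH; first by rewrite size_map in v_size.
- by rewrite sorted_map in sv'.
- by apply: MT_cons_shift MTu; rewrite size_map lt0n size_eq0.
Qed.

Lemma MT_gen (u : seq nat) : MT u -> gen_suboperad MT_generators u.
Proof.
move=> MTu; have u_perm : perm_eq u (sort leq u) by rewrite perm_sym perm_sort.
have [s u_sort] := perm_eq_pact u_perm; rewrite -u_sort.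
apply/gen_act/sorted_MT_gen; first exact/sort_sorted/leq_total.
exact: MT_perm MTu.
Qed.

Theorem mainTheorem2 :
  is_sym_suboperad End_ /\ is_sym_suboperad FP /\ is_sym_suboperad MT /\
  (forall u : seq nat,
     gen_suboperad (fun x => x = [:: 0; 0] \/ x = [:: 0; 1]) u <-> MT u).
Proof.
split; first exact: End_sym_suboperad.
split; first exact: FP_sym_suboperad.
split; first exact: MT_sym_suboperad.
by move=> u; split; [apply: gen_MT | apply: MT_gen].
Qed.
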